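(* Let $\gamma$ be a locally monotone Jordan curve with a continuous periodic parametrisation $\gamma:\mathbb{R}\to\mathbb{C}$ and local monotonicity constant $\mu$. Let $\varphi:\mathbb{R}\to\mathbb{R}_{\ge0}$ be smooth, supported in $[-1,1]$, with $\int_{\mathbb{R}}\varphi=1$, and for $\varepsilon>0$ set \[ \gamma_\varepsilon(s)=\int_{\mathbb{R}}\frac1\varepsilon\varphi\!\left(\frac u\varepsilon\right)\gamma(s-u)\,du . \] Let $\mu_\varepsilon$ be the local monotonicity constant of $\gamma_\varepsilon$ (which for sufficiently small $\varepsilon$ is a smooth locally monotone Jordan curve). Then $\liminf_{\varepsilon\to0}\mu_\varepsilon\ge\mu$.
   Context: Locally monotone: a Jordan curve with periodic parametrisation $\gamma$ is locally monotone if for every $\theta\in\mathbb{R}$ there are an open interval $U_\theta=(\theta_1,\theta_2)\ni\theta$ and a unit vector $v_\theta\in\mathbb{R}^2$ such that $g_{v_\theta}(s)=\gamma(s)\cdot v_\theta$ is strictly monotone on $U_\theta$. For such a pair put $\mu(\theta,v_\theta,U_\theta)=\min\{|g_{v_\theta}(\theta)-g_{v_\theta}(\theta_1)|,|g_{v_\theta}(\theta)-g_{v_\theta}(\theta_2)|\}$, let $\mu(\theta)$ be the maximal (supremal) value of $\mu(\theta,v_\theta,U_\theta)$ over all admissible pairs, and define the local monotonicity constant of $\gamma$ as $\mu=\min_{\theta\in\mathbb{R}}\mu(\theta)$ (infimum). *)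

From Stdlib Require Import Reals.
From Coquelicot Require Import Coquelicot.
Open Scope R_scope.

(* Points of the plane C = R^2 are pairs of reals. *)
Definition pt := (R * R)%type.

Definition dotp (p v : pt) : R := fst p * fst v + snd p * snd v.

Definition unit_vec (v : pt) : Prop := fst v ^ 2 + snd v ^ 2 = 1.

Definition gv (gamma : R -> pt) (v : pt) (s : R) : R := dotp (gamma s) v.

Definition strict_mono_on (f : R -> R) (a b : R) : Prop :=
  (forall x y, a < x -> x < y -> y < b -> f x < f y) \/
  (forall x y, a < x -> x < y -> y < b -> f y < f x).

Definition admissible (gamma : R -> pt) (th th1 th2 : R) (v : pt) : Prop :=
  th1 < th < th2 /\ unit_vec v /\ strict_mono_on (gv gamma v) th1 th2.

Definition mu_triple (gamma : R -> pt) (th th1 th2 : R) (v : pt) : R :=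
  Rmin (Rabs (gv gamma v th - gv gamma v th1))
       (Rabs (gv gamma v th - gv gamma v th2)).

(* mu(theta): supremum over admissible pairs (m_infty if there is none). *)
Definition mu_at (gamma : R -> pt) (th : R) : Rbar :=
  Rbar_lub (fun x : Rbar => exists th1 th2 v,
     admissible gamma th th1 th2 v /\ x = Finite (mu_triple gamma th th1 th2 v)).

Definition loc_mono_const (gamma : R -> pt) : Rbar :=
  Rbar_glb (fun x : Rbar => exists th : R, x = mu_at gamma th).

Definition locally_monotone (gamma : R -> pt) : Prop :=
  forall th : R, exists th1 th2 v, admissible gamma th th1 th2 v.

Definition jordan_param (gamma : R -> pt) : Prop :=
  (forall s, continuous (fun t => fst (gamma t)) s) /\
  (forall s, continuous (fun t => snd (gamma t)) s) /\
  exists T : R, 0 < T /\ (forall s, gamma (s + T) = gamma s) /\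
    (forall s t, 0 <= s < T -> 0 <= t < T -> gamma s = gamma t -> s = t).

Definition smooth (f : R -> R) : Prop := forall (n : nat) (x : R), ex_derive_n f n x.

(* mollification gamma_eps(s) = int_R (1/eps) phi(u/eps) gamma(s-u) du;
   since supp phi is in [-1,1], the integrand vanishes outside [-eps,eps]. *)
Definition mollify (phi : R -> R) (gamma : R -> pt) (eps : R) (s : R) : pt :=
  (RInt (fun u => / eps * phi (u / eps) * fst (gamma (s - u))) (- eps) eps,
   RInt (fun u => / eps * phi (u / eps) * snd (gamma (s - u))) (- eps) eps).

From Stdlib Require Import Reals Lra ZArith Classical IndefiniteDescription FunctionalExtensionality.
From Coquelicot Require Import Coquelicot.
Open Scope R_scope.

(* Fix c below the monotonicity constant of gamma.  Each theta has an admissible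
   pair (theta1, theta2, v) whose value exceeds c.  Mollification commutes with
   the projection s |-> gamma(s).v; a nonnegative average over windows of width
   eps of a function strictly monotone on (theta1, theta2) is strictly monotone
   on (theta1 + eps, theta2 - eps); and the mollified projections converge to
   the original one locally uniformly.  Hence, for theta' near theta and eps
   small, a slightly shrunk interval is admissible for gamma_eps at theta' with
   value still above c.  Compactness of one period makes the threshold on eps
   uniform, and periodicity of gamma_eps covers all other parameters. *)

Lemma ex_RInt_continuous_R (f : R -> R) (a b : R) :
  (forall x, continuous f x) -> ex_RInt f a b.
Proof.
  intros Hf. apply (ex_RInt_continuous (V := R_CompleteNormedModule)).
  intros x _; apply Hf.
Qed.

Lemma RInt_scal_R (f : R -> R) (a b k : R) :
  ex_RInt f a b -> RInt (fun x => k * f x) a b = k * RInt f a b :> R.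
Proof. intros Hf. exact (RInt_scal (V := R_CompleteNormedModule) f a b k Hf). Qed.

Lemma RInt_lincomb (f g : R -> R) (a b k l : R) :
  ex_RInt f a b -> ex_RInt g a b ->
  RInt (fun x => k * f x + l * g x) a b = k * RInt f a b + l * RInt g a b :> R.
Proof.
  intros Hf Hg.
  rewrite (RInt_plus (V := R_CompleteNormedModule) (fun x => scal k (f x)) (fun x => scal l (g x))).
  - rewrite !(RInt_scal (V := R_CompleteNormedModule)); auto.
  - now apply (ex_RInt_scal (V := R_CompleteNormedModule)).
  - now apply (ex_RInt_scal (V := R_CompleteNormedModule)).
Qed.

Lemma RInt_gt_0_of_subinterval (f : R -> R) (a b p q : R) :
  a <= p -> p < q -> q <= b -> (forall x, continuous f x) ->
  (forall x, a < x < b -> 0 <= f x) -> (forall x, p < x < q -> 0 < f x) ->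
  0 < RInt f a b.
Proof.
  intros Hap Hpq Hqb Hf Hge Hgt.
  assert (Hex : forall x y, ex_RInt f x y) by (intros; now apply ex_RInt_continuous_R).
  rewrite <- (RInt_Chasles f a p b), <- (RInt_Chasles f p q b); auto.
  assert (0 <= RInt f a p) by (apply RInt_ge_0; auto; intros; apply Hge; lra).
  assert (0 <= RInt f q b) by (apply RInt_ge_0; auto; intros; apply Hge; lra).
  assert (0 < RInt f p q) by (apply RInt_gt_0; auto).
  simpl; unfold plus; simpl; lra.
Qed.

Lemma abs_RInt_weighted_le (w f : R -> R) (a b eta : R) :
  a <= b -> (forall x, continuous w x) -> (forall x, continuous f x) ->
  (forall x, a < x < b -> 0 <= w x) -> (forall x, a < x < b -> Rabs (f x) <= eta) ->
  Rabs (RInt (fun x => w x * f x) a b) <= eta * RInt w a b.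
Proof.
  intros Hab Hw Hf Hw0 Hbound.
  assert (Hexw : ex_RInt w a b) by now apply ex_RInt_continuous_R.
  assert (Hexk : forall k, ex_RInt (fun x => k * w x) a b).
  { intros k. now apply (ex_RInt_scal (V := R_CompleteNormedModule)). }
  assert (Hexwf : ex_RInt (fun x => w x * f x) a b).
  { apply ex_RInt_continuous_R. intros x. now apply (continuous_mult w f). }
  apply Rabs_le; split.
  - rewrite Ropp_mult_distr_l, <- RInt_scal_R by exact Hexw.
    apply RInt_le; auto.
    intros x Hx. specialize (Hbound x Hx). specialize (Hw0 x Hx).
    apply Rabs_le_between in Hbound. nra.
  - rewrite <- RInt_scal_R by exact Hexw.
    apply RInt_le; auto.
    intros x Hx. specialize (Hbound x Hx). specialize (Hw0 x Hx).
    apply Rabs_le_between in Hbound. nra.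
Qed.

Lemma continuous_epsilon_delta (f : R -> R) (x e : R) :
  continuous f x -> 0 < e ->
  exists d, 0 < d /\ forall y, Rabs (y - x) < d -> Rabs (f y - f x) < e.
Proof.
  intros Hf He.
  destruct (Hf (ball (f x) (mkposreal e He))) as [d Hd]; [apply locally_ball|].
  exists d; split; [apply cond_pos|].
  intros y Hy. exact (Hd y Hy).
Qed.

Lemma continuous_reflect (h : R -> R) (s u : R) :
  (forall x, continuous h x) -> continuous (fun u => h (s - u)) u.
Proof.
  intros Hh. apply (continuous_comp (fun u => s - u) h); [|apply Hh].
  apply (continuous_minus (fun _ => s) (fun u => u)); [apply continuous_const | apply continuous_id].
Qed.

(* [mu_triple gamma th a b v] is [gap (gv gamma v) th a b] by conversion. *)
Definition gap (g : R -> R) (t a b : R) : R :=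
  Rmin (Rabs (g t - g a)) (Rabs (g t - g b)).

Section Mollifier.

Variable phi : R -> R.
Hypothesis phi_cont : forall x, continuous phi x.
Hypothesis phi_ge0 : forall x, 0 <= phi x.
Hypothesis phi_supp : forall x, phi x <> 0 -> -1 <= x <= 1.
Hypothesis phi_int : RInt phi (-1) 1 = 1.

Definition mollifier (eps u : R) : R := / eps * phi (u / eps).

Definition mollify_fun (eps : R) (h : R -> R) (s : R) : R :=
  RInt (fun u => mollifier eps u * h (s - u)) (- eps) eps.

Lemma continuous_mollifier (eps u : R) : continuous (mollifier eps) u.
Proof.
  apply (continuous_mult (fun _ => / eps) (fun u => phi (u / eps))); [apply continuous_const|].
  apply (continuous_comp (fun u => u / eps) phi); [|apply phi_cont].
  apply (continuous_mult (fun u => u) (fun _ => / eps)); [apply continuous_id | apply continuous_const].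
Qed.

Lemma mollifier_ge0 (eps u : R) : 0 < eps -> 0 <= mollifier eps u.
Proof.
  intros Heps. apply Rmult_le_pos; [left; now apply Rinv_0_lt_compat | apply phi_ge0].
Qed.

Lemma RInt_mollifier (eps : R) : 0 < eps -> RInt (mollifier eps) (- eps) eps = 1.
Proof.
  intros Heps.
  assert (E := RInt_comp_lin (V := R_CompleteNormedModule) phi (/ eps) 0 (- eps) eps).
  replace (/ eps * - eps + 0) with (-1) in E by (field; lra).
  replace (/ eps * eps + 0) with 1 in E by (field; lra).
  rewrite <- phi_int, <- E by now apply ex_RInt_continuous_R.
  apply RInt_ext. intros u _. unfold mollifier, scal; simpl; unfold mult; simpl.
  do 2 f_equal; unfold Rdiv; ring.
Qed.

Lemma phi_pos_interval : exists p q, -1 <= p < q /\ q <= 1 /\ forall x, p < x < q -> 0 < phi x.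
Proof.
  destruct (classic (exists c, phi c <> 0)) as [[c Hc] | Hzero].
  - assert (Hc0 : 0 < phi c) by (destruct (phi_ge0 c); [assumption | congruence]).
    destruct (continuous_epsilon_delta phi c (phi c) (phi_cont c) Hc0) as [d [Hd Hnear]].
    assert (Hpos : forall x, Rabs (x - c) < d -> 0 < phi x).
    { intros x Hx. specialize (Hnear x Hx). apply Rabs_def2 in Hnear. lra. }
    assert (Hl : 0 < phi (c - d / 2)) by (apply Hpos; rewrite Rabs_left; lra).
    assert (Hr : 0 < phi (c + d / 2)) by (apply Hpos; rewrite Rabs_right; lra).
    destruct (phi_supp (c - d / 2)), (phi_supp (c + d / 2)); try lra.
    exists (c - d / 2), (c + d / 2). split; [split; [assumption | lra]|].
    split; [assumption|]. intros x Hx. apply Hpos. apply Rabs_def1; lra.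
  - exfalso.
    assert (E : RInt phi (-1) 1 = RInt (fun _ => 0) (-1) 1).
    { apply RInt_ext. intros x _. apply NNPP. intros Hx. apply Hzero. now exists x. }
    rewrite phi_int, RInt_const in E. unfold scal in E; simpl in E; unfold mult in E; simpl in E.
    lra.
Qed.

Lemma mollifier_pos_interval (eps : R) : 0 < eps ->
  exists p q, - eps <= p < q /\ q <= eps /\ forall u, p < u < q -> 0 < mollifier eps u.
Proof.
  intros Heps. destruct phi_pos_interval as [p [q [[Hp Hpq] [Hq Hpos]]]].
  exists (eps * p), (eps * q). repeat split; try nra.
  intros u Hu. apply Rmult_lt_0_compat; [now apply Rinv_0_lt_compat|].
  assert (E : u / eps * eps = u) by (field; lra).
  apply Hpos. split; nra.
Qed.

Lemma continuous_mollifier_mul (eps : R) (g : R -> R) (u : R) :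
  continuous g u -> continuous (fun u => mollifier eps u * g u) u.
Proof. apply (continuous_mult (mollifier eps) g), continuous_mollifier. Qed.

Lemma continuous_mollify_integrand (eps : R) (h : R -> R) (s u : R) :
  (forall x, continuous h x) -> continuous (fun u => mollifier eps u * h (s - u)) u.
Proof. intros Hh. now apply continuous_mollifier_mul, continuous_reflect. Qed.

Lemma mollify_fun_sub_const (eps : R) (h : R -> R) (s c : R) :
  (forall x, continuous h x) -> 0 < eps ->
  mollify_fun eps h s - c = RInt (fun u => mollifier eps u * (h (s - u) - c)) (- eps) eps.
Proof.
  intros Hh Heps. unfold mollify_fun.
  rewrite <- (Rmult_1_r c) at 1. rewrite <- (RInt_mollifier eps Heps).
  set (F := fun u => mollifier eps u * h (s - u)).
  replace (RInt F (- eps) eps - c * RInt (mollifier eps) (- eps) eps)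
    with (1 * RInt F (- eps) eps + - c * RInt (mollifier eps) (- eps) eps) by ring.
  rewrite <- RInt_lincomb.
  - apply RInt_ext. intros u _. unfold F; simpl; ring.
  - apply ex_RInt_continuous_R. intros u. now apply continuous_mollify_integrand.
  - apply ex_RInt_continuous_R. apply continuous_mollifier.
Qed.

Lemma mollify_fun_near (h : R -> R) (p eta : R) :
  (forall x, continuous h x) -> 0 < eta ->
  exists d, 0 < d /\ forall s eps, Rabs (s - p) < d -> 0 < eps < d ->
    Rabs (mollify_fun eps h s - h p) <= eta.
Proof.
  intros Hh Heta.
  destruct (continuous_epsilon_delta h p eta (Hh p) Heta) as [d [Hd Hnear]].
  exists (d / 2); split; [lra|].
  intros s eps Hs Heps.
  rewrite mollify_fun_sub_const by (auto; lra).
  rewrite <- (Rmult_1_r eta), <- (RInt_mollifier eps) by lra.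
  apply abs_RInt_weighted_le; [lra | apply continuous_mollifier | | |].
  - intros u. apply (continuous_minus (fun u => h (s - u)) (fun _ => h p));
      [now apply continuous_reflect | apply continuous_const].
  - intros u _. apply mollifier_ge0; lra.
  - intros u Hu. left. apply Hnear.
    apply Rabs_def2 in Hs. apply Rabs_def1; lra.
Qed.

Lemma mollify_fun_increasing (eps : R) (h : R -> R) (t1 t2 a b : R) :
  (forall x, continuous h x) -> 0 < eps -> t1 + eps <= a -> b + eps <= t2 ->
  (forall x y, t1 < x -> x < y -> y < t2 -> h x < h y) ->
  forall x y, a < x -> x < y -> y < b -> mollify_fun eps h x < mollify_fun eps h y.
Proof.
  intros Hh Heps Ha Hb Hincr x y Hx Hxy Hy.
  destruct (mollifier_pos_interval eps Heps) as [p [q [[Hp Hpq] [Hq Hpos]]]].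
  apply Rlt_0_minus. unfold mollify_fun.
  set (Fx := fun u => mollifier eps u * h (x - u)).
  set (Fy := fun u => mollifier eps u * h (y - u)).
  replace (RInt Fy (- eps) eps - RInt Fx (- eps) eps)
    with (1 * RInt Fy (- eps) eps + -1 * RInt Fx (- eps) eps) by ring.
  rewrite <- RInt_lincomb
    by (apply ex_RInt_continuous_R; intros u; now apply continuous_mollify_integrand).
  rewrite (RInt_ext _ (fun u => mollifier eps u * (h (y - u) - h (x - u))))
    by (intros u _; unfold Fx, Fy; simpl; ring).
  apply (RInt_gt_0_of_subinterval _ (- eps) eps p q); try lra.
  - intros u. apply continuous_mollifier_mul.
    apply (continuous_minus (fun u => h (y - u)) (fun u => h (x - u))); now apply continuous_reflect.
  - intros u Hu.
    assert (0 <= mollifier eps u) by now apply mollifier_ge0.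
    assert (h (x - u) < h (y - u)) by (apply Hincr; lra). nra.
  - intros u Hu.
    assert (0 < mollifier eps u) by now apply Hpos.
    assert (h (x - u) < h (y - u)) by (apply Hincr; lra). nra.
Qed.

Lemma mollify_fun_opp (eps : R) (h : R -> R) (s : R) :
  (forall x, continuous h x) ->
  mollify_fun eps (fun t => - h t) s = - mollify_fun eps h s.
Proof.
  intros Hh. unfold mollify_fun.
  set (F := fun u => mollifier eps u * h (s - u)).
  replace (- RInt F (- eps) eps) with (-1 * RInt F (- eps) eps) by ring.
  rewrite <- RInt_scal_R.
  - apply RInt_ext. intros u _. unfold F; simpl; ring.
  - apply ex_RInt_continuous_R. intros u. now apply continuous_mollify_integrand.
Qed.

Lemma strict_mono_on_mollify_fun (eps : R) (h : R -> R) (t1 t2 a b : R) :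
  (forall x, continuous h x) -> 0 < eps -> t1 + eps <= a -> b + eps <= t2 ->
  strict_mono_on h t1 t2 -> strict_mono_on (mollify_fun eps h) a b.
Proof.
  intros Hh Heps Ha Hb [Hincr | Hdecr]; [left | right].
  - now apply (mollify_fun_increasing eps h t1 t2 a b).
  - intros x y Hx Hxy Hy. apply Ropp_lt_cancel. rewrite <- !mollify_fun_opp by assumption.
    apply (mollify_fun_increasing eps (fun t => - h t) t1 t2 a b); auto.
    + intros u. now apply (continuous_opp h).
    + intros u v Hu Huv Hv. apply Ropp_lt_contravar. now apply Hdecr.
Qed.

Lemma mollify_fun_gap (h : R -> R) (t1 t t2 c : R) :
  (forall x, continuous h x) -> t1 < t < t2 -> strict_mono_on h t1 t2 -> c < gap h t t1 t2 ->
  exists d, 0 < d /\ forall t' eps, Rabs (t' - t) < d -> 0 < eps < d ->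
    exists a b, a < t' < b /\ strict_mono_on (mollify_fun eps h) a b /\
      c < gap (mollify_fun eps h) t' a b.
Proof.
  intros Hh Ht Hmono Hgap.
  set (eta := (gap h t t1 t2 - c) / 4).
  assert (Heta : 0 < eta) by (unfold eta; lra).
  destruct (mollify_fun_near h t eta Hh Heta) as [d0 [Hd0 Near0]].
  destruct (mollify_fun_near h t1 eta Hh Heta) as [d1 [Hd1 Near1]].
  destruct (mollify_fun_near h t2 eta Hh Heta) as [d2 [Hd2 Near2]].
  set (r := Rmin (Rmin d1 d2) (Rmin (t - t1) (t2 - t)) / 2).
  assert (Hr : 0 < r /\ r < d1 /\ r < d2 /\ 2 * r <= t - t1 /\ 2 * r <= t2 - t).
  { pose proof (Rmin_l (Rmin d1 d2) (Rmin (t - t1) (t2 - t))).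
    pose proof (Rmin_r (Rmin d1 d2) (Rmin (t - t1) (t2 - t))).
    pose proof (Rmin_l d1 d2). pose proof (Rmin_r d1 d2).
    pose proof (Rmin_l (t - t1) (t2 - t)). pose proof (Rmin_r (t - t1) (t2 - t)).
    assert (0 < Rmin (Rmin d1 d2) (Rmin (t - t1) (t2 - t))) by (repeat apply Rmin_pos; lra).
    unfold r; lra. }
  exists (Rmin d0 r). split; [now apply Rmin_pos|].
  intros t' eps Ht' Heps.
  pose proof (Rmin_l d0 r). pose proof (Rmin_r d0 r).
  apply Rabs_def2 in Ht'.
  exists (t1 + r), (t2 - r). split; [lra|]. split.
  { apply (strict_mono_on_mollify_fun eps h t1 t2); auto; lra. }
  assert (E0 : Rabs (mollify_fun eps h t' - h t) <= eta) by (apply Near0; try apply Rabs_def1; lra).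
  assert (E1 : Rabs (mollify_fun eps h (t1 + r) - h t1) <= eta)
    by (apply Near1; try apply Rabs_def1; lra).
  assert (E2 : Rabs (mollify_fun eps h (t2 - r) - h t2) <= eta)
    by (apply Near2; try apply Rabs_def1; lra).
  unfold gap in *. unfold eta in *.
  pose proof (Rmin_l (Rabs (h t - h t1)) (Rabs (h t - h t2))).
  pose proof (Rmin_r (Rabs (h t - h t1)) (Rabs (h t - h t2))).
  apply Rmin_glb_lt; split_Rabs; lra.
Qed.

End Mollifier.

Lemma Rbar_lub_ub (E : Rbar -> Prop) (x : Rbar) : E x -> Rbar_le x (Rbar_lub E).
Proof. intros Ex. unfold Rbar_lub. destruct (Rbar_ex_lub E) as [l Hl]; simpl. now apply (proj1 Hl). Qed.

Lemma Rbar_lub_gt (E : Rbar -> Prop) (m : R) :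
  Rbar_lt m (Rbar_lub E) -> exists x, E x /\ Rbar_lt m x.
Proof.
  unfold Rbar_lub. destruct (Rbar_ex_lub E) as [l Hl]. intros Hm.
  apply NNPP. intros Hnone. apply (Rbar_lt_not_le l m Hm), (proj2 Hl).
  intros x Ex. apply Rbar_not_lt_le. intros Hx. apply Hnone. now exists x.
Qed.

Lemma Rbar_glb_lb (E : Rbar -> Prop) (x : Rbar) : E x -> Rbar_le (Rbar_glb E) x.
Proof. intros Ex. unfold Rbar_glb. destruct (Rbar_ex_glb E) as [l Hl]; simpl. now apply (proj1 Hl). Qed.

Lemma Rbar_glb_ge (E : Rbar -> Prop) (b : Rbar) :
  (forall x, E x -> Rbar_le b x) -> Rbar_le b (Rbar_glb E).
Proof. intros Hb. unfold Rbar_glb. destruct (Rbar_ex_glb E) as [l Hl]; simpl. now apply (proj2 Hl). Qed.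

Lemma Rbar_lt_between (m : R) (L : Rbar) : Rbar_lt m L -> exists c, m < c /\ Rbar_lt c L.
Proof.
  destruct L as [l | |]; simpl; intros Hm; try contradiction.
  - exists ((m + l) / 2); lra.
  - exists (m + 1); split; [lra | exact I].
Qed.

Lemma continuous_gv (gamma : R -> pt) (v : pt) :
  (forall s, continuous (fun t => fst (gamma t)) s) ->
  (forall s, continuous (fun t => snd (gamma t)) s) ->
  forall s, continuous (gv gamma v) s.
Proof.
  intros H1 H2 s. unfold gv, dotp.
  apply (continuous_plus (fun t => fst (gamma t) * fst v) (fun t => snd (gamma t) * snd v)).
  - apply (continuous_mult (fun t => fst (gamma t)) (fun _ => fst v)); auto using continuous_const.
  - apply (continuous_mult (fun t => snd (gamma t)) (fun _ => snd v)); auto using continuous_const.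
Qed.

Lemma gv_mollify (phi : R -> R) (gamma : R -> pt) (eps : R) (v : pt) :
  (forall x, continuous phi x) ->
  (forall s, continuous (fun t => fst (gamma t)) s) ->
  (forall s, continuous (fun t => snd (gamma t)) s) ->
  gv (mollify phi gamma eps) v = mollify_fun phi eps (gv gamma v).
Proof.
  intros phi_cont H1 H2. apply functional_extensionality. intros s.
  unfold gv at 1, dotp, mollify, mollify_fun; simpl.
  rewrite (Rmult_comm _ (fst v)), (Rmult_comm _ (snd v)), <- RInt_lincomb.
  - apply RInt_ext. intros u _. unfold gv, dotp, mollifier; simpl; ring.
  - apply ex_RInt_continuous_R. intros u.
    exact (continuous_mollify_integrand phi phi_cont eps (fun t => fst (gamma t)) s u H1).
  - apply ex_RInt_continuous_R. intros u.
    exact (continuous_mollify_integrand phi phi_cont eps (fun t => snd (gamma t)) s u H2).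
Qed.

Lemma mu_at_mollify_gt (phi : R -> R) (gamma : R -> pt) (c th : R) :
  (forall x, continuous phi x) -> (forall x, 0 <= phi x) ->
  (forall x, phi x <> 0 -> -1 <= x <= 1) -> RInt phi (-1) 1 = 1 ->
  (forall s, continuous (fun t => fst (gamma t)) s) ->
  (forall s, continuous (fun t => snd (gamma t)) s) ->
  Rbar_lt c (mu_at gamma th) ->
  exists d, 0 < d /\ forall th' eps, Rabs (th' - th) < d -> 0 < eps < d ->
    Rbar_lt c (mu_at (mollify phi gamma eps) th').
Proof.
  intros Hphi Hge0 Hsupp Hint Hfst Hsnd Hc.
  destruct (Rbar_lub_gt _ _ Hc) as [x [[th1 [th2 [v [[Hth [Hv Hmono]] ->]]]] Hx]].
  destruct (mollify_fun_gap phi Hphi Hge0 Hsupp Hint (gv gamma v) th1 th th2 c)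
    as [d [Hd Hnear]]; auto using continuous_gv.
  exists d; split; [exact Hd|]. intros th' eps Hth' Heps.
  destruct (Hnear th' eps Hth' Heps) as [a [b [Hab [Hmono' Hgap]]]].
  apply Rbar_lt_le_trans with (Finite (mu_triple (mollify phi gamma eps) th' a b v)).
  - change (c < gap (gv (mollify phi gamma eps) v) th' a b).
    now rewrite gv_mollify.
  - apply Rbar_lub_ub. exists a, b, v. split; [|reflexivity].
    repeat split; try apply Hab; [exact Hv|]. now rewrite gv_mollify.
Qed.

Lemma periodic_IZR {A : Type} (f : R -> A) (T : R) :
  (forall s, f (s + T) = f s) -> forall (k : Z) s, f (s + IZR k * T) = f s.
Proof.
  intros Hper k. induction k as [| k IHk | k IHk] using Z.peano_ind; intros s.
  - now rewrite Rmult_0_l, Rplus_0_r.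
  - rewrite succ_IZR. replace (s + (IZR k + 1) * T) with (s + IZR k * T + T) by ring.
    now rewrite Hper.
  - rewrite <- Z.sub_1_r, minus_IZR, <- Hper.
    replace (s + (IZR k - IZR 1) * T + T) with (s + IZR k * T) by (simpl; ring).
    apply IHk.
Qed.

Lemma exists_period_representative (T th : R) :
  0 < T -> exists th0 k, 0 <= th0 <= T /\ th = th0 + IZR k * T.
Proof.
  intros HT. destruct (base_Int_part (th / T)) as [Hlow Hhigh].
  assert (E : th / T * T = th) by (field; lra).
  exists (th - IZR (Int_part (th / T)) * T), (Int_part (th / T)).
  split; [split; nra | ring].
Qed.

Lemma mollify_periodic (phi : R -> R) (gamma : R -> pt) (eps T : R) :
  (forall s, gamma (s + T) = gamma s) ->
  forall s, mollify phi gamma eps (s + T) = mollify phi gamma eps s.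
Proof.
  intros Hper s. unfold mollify.
  f_equal; apply RInt_ext; intros u _;
    now replace (s + T - u) with (s - u + T) by ring; rewrite Hper.
Qed.

Lemma admissible_shift (f : R -> pt) (sh th a b : R) (v : pt) :
  (forall s, f (s + sh) = f s) -> admissible f th a b v ->
  admissible f (th + sh) (a + sh) (b + sh) v /\
  mu_triple f (th + sh) (a + sh) (b + sh) v = mu_triple f th a b v.
Proof.
  intros Hper [Hth [Hv Hmono]].
  assert (Hg : forall x, gv f v (x + sh) = gv f v x) by (intros x; unfold gv; now rewrite Hper).
  assert (Hg' : forall x, gv f v x = gv f v (x - sh)).
  { intros x. rewrite <- (Hg (x - sh)). f_equal. ring. }
  split.
  - split; [lra|]. split; [exact Hv|].
    destruct Hmono as [Hmono | Hmono]; [left | right];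
      intros x y Hx Hxy Hy; rewrite (Hg' x), (Hg' y); apply Hmono; lra.
  - unfold mu_triple. now rewrite !Hg.
Qed.

Lemma mu_at_shift_ge (f : R -> pt) (sh th : R) :
  (forall s, f (s + sh) = f s) -> Rbar_le (mu_at f th) (mu_at f (th + sh)).
Proof.
  intros Hper. apply Rbar_lub_subset. intros x [a [b [v [Had ->]]]].
  destruct (admissible_shift f sh th a b v Hper Had) as [Had' Heq].
  exists (a + sh), (b + sh), v. now rewrite Heq.
Qed.

Lemma mu_at_periodic (f : R -> pt) (sh th : R) :
  (forall s, f (s + sh) = f s) -> mu_at f (th + sh) = mu_at f th.
Proof.
  intros Hper. apply Rbar_le_antisym; [|now apply mu_at_shift_ge].
  replace th with (th + sh + - sh) at 2 by ring.
  apply mu_at_shift_ge. intros s. rewrite <- (Hper (s + - sh)). f_equal. ring.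
Qed.

Lemma uniform_radius_on_segment (a b : R) (P : R -> R -> Prop) :
  (forall t, a <= t <= b ->
     exists d, 0 < d /\ forall t' r, Rabs (t' - t) < d -> 0 < r < d -> P t' r) ->
  exists d, 0 < d /\ forall t r, a <= t <= b -> 0 < r < d -> P t r.
Proof.
  intros Hloc.
  assert (Hgauge : forall t, {d : posreal |
    a <= t <= b -> forall t' r, Rabs (t' - t) < d -> 0 < r < d -> P t' r}).
  { intros t. apply constructive_indefinite_description.
    destruct (classic (a <= t <= b)) as [Ht | Ht].
    - destruct (Hloc t Ht) as [d [Hd HP]]. now exists (mkposreal d Hd).
    - exists (mkposreal 1 Rlt_0_1). intros; contradiction. }
  set (delta := fun t : Compactness.Tn 1 R => proj1_sig (Hgauge (fst t))).
  destruct (compactness_value 1 (a, tt) (b, tt) delta) as [d Hd].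
  exists d; split; [apply cond_pos|].
  intros t r Ht Hr. apply NNPP. intros HnP.
  apply (Hd (t, tt)); [simpl; tauto|].
  intros [[t0 []] [Ht0 [[Hclose _] Hdle]]].
  apply HnP. unfold delta in *; simpl in *.
  destruct (Hgauge t0) as [d0 HP]; simpl in *.
  apply HP; [tauto | assumption | lra].
Qed.

Theorem lemma4p2 (gamma : R -> pt) (phi : R -> R) :
  jordan_param gamma ->
  locally_monotone gamma ->
  smooth phi ->
  (forall x, 0 <= phi x) ->
  (forall x, phi x <> 0 -> -1 <= x <= 1) ->
  RInt phi (-1) 1 = 1 ->
  (* liminf_{eps -> 0+} mu_eps >= mu *)
  forall m : R, Rbar_lt (Finite m) (loc_mono_const gamma) ->
    exists delta : R, 0 < delta /\
      forall eps : R, 0 < eps < delta ->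
        Rbar_lt (Finite m) (loc_mono_const (mollify phi gamma eps)).
Proof.
  intros [Hfst [Hsnd [T [HT [Hper _]]]]] _ Hsmooth Hge0 Hsupp Hint m Hm.
  assert (Hphi : forall x, continuous phi x).
  { intros x. exact (ex_derive_continuous (K := R_AbsRing) (V := R_NormedModule) phi x (Hsmooth 1%nat x)). }
  destruct (Rbar_lt_between m _ Hm) as [c [Hmc Hc]].
  destruct (uniform_radius_on_segment 0 T
              (fun th eps => Rbar_lt c (mu_at (mollify phi gamma eps) th))) as [d [Hd Hunif]].
  { intros th _. apply mu_at_mollify_gt; auto.
    apply (Rbar_lt_le_trans _ _ _ Hc), Rbar_glb_lb. now exists th. }
  exists d; split; [exact Hd|]. intros eps Heps.
  apply Rbar_lt_le_trans with (Finite c); [exact Hmc|].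
  apply Rbar_glb_ge. intros x [th ->].
  destruct (exists_period_representative T th HT) as [th0 [k [Hth0 ->]]].
  rewrite mu_at_periodic by now apply periodic_IZR, mollify_periodic.
  now apply Rbar_lt_le, Hunif.
Qed.
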